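(* Let $n\ge s\ge 1$ and $\ell\ge 1$ be integers, and let $Q=\operatorname{diag}(Q_s, I_{n-s})$ be an $n\times n$ block diagonal matrix, where $Q_s$ is a rational orthogonal matrix of order $s$ and level $\ell$ each of whose entries is either $0$ or a non-integer rational number, and $I_{n-s}$ is the identity matrix of order $n-s$. Let $0<p<1$ and let $A$ be the adjacency matrix of a random graph $G\sim\mathcal{G}(n,p)$. Then $$\Pr\big(Q^\top A Q \text{ is an integer matrix}\big)\le \hat p^{\,\frac{s}{2\ell^4}\left(\frac{s}{2\ell^4}+n-s-1\right)},$$ where $\hat p=\max\{p,1-p\}$.
   Context: $\mathcal{G}(n,p)$ is the random graph on $n$ labelled vertices in which each possible edge is present independently with probability $p$; its adjacency matrix has $(i,j)$ entry $1$ if $ij$ is an edge and $0$ otherwise. The level of a rational matrix $M$ is the smallest positive integer $\ell$ such that $\ell M$ has integer entries. A rational orthogonal matrix is a matrix with rational entries satisfying $Q^\top Q=I$. *)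

From HB Require Import structures.
From mathcomp Require Import all_boot all_order all_algebra.
From mathcomp Require Import all_classical all_reals all_analysis.
Set Implicit Arguments. Unset Strict Implicit. Unset Printing Implicit Defensive.
Import Order.TTheory GRing.Theory Num.Theory.
Local Open Scope ring_scope.

Definition int_mx (m k : nat) (M : 'M[rat]_(m, k)) : bool :=
  [forall i, forall j, M i j \is a Num.int].

Definition is_level (m k : nat) (M : 'M[rat]_(m, k)) (l : nat) : Prop :=
  (0 < l)%N /\ int_mx (l%:R *: M) /\
  forall l' : nat, (0 < l')%N -> int_mx (l'%:R *: M) -> (l <= l')%N.

Definition rat_orthogonal (s : nat) (Q : 'M[rat]_s) : Prop := Q^T *m Q = 1%:M.

(* Unordered pairs {i,j}, i<j, of vertices of the labelled vertex set 'I_n. *)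
Definition vpair (n : nat) := {x : 'I_n * 'I_n | (x.1 < x.2)%N}.

Definition graph (n : nat) := {ffun vpair n -> bool}.

Definition is_edge (n : nat) (g : graph n) (i j : 'I_n) : bool :=
  match insub (i, j) : option (vpair n) with
  | Some e => g e
  | None => match insub (j, i) : option (vpair n) with
            | Some e => g e
            | None => false
            end
  end.

Definition adj_mx (n : nat) (g : graph n) : 'M[rat]_n :=
  \matrix_(i, j) (is_edge g i j)%:R.

Definition gnp_weight (R : realType) (n : nat) (p : R) (g : graph n) : R :=
  \prod_(e : vpair n) (if g e then p else 1 - p).

Definition gnp_prob (R : realType) (n : nat) (p : R) (E : pred (graph n)) : R :=
  \sum_(g : graph n | E g) gnp_weight p g.

From HB Require Import structures.
From mathcomp Require Import all_boot all_order all_algebra.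
From mathcomp Require Import all_classical all_reals all_analysis.
From mathcomp Require Import lra zify.
(* Re-imported so that [subsetP], [setT], [set0], ... refer to finite sets. *)
From mathcomp Require Import fintype finset.
Import Order.TTheory GRing.Theory Num.Theory.
Local Open Scope ring_scope.
Set Implicit Arguments. Unset Strict Implicit. Unset Printing Implicit Defensive.

(* The entries of [Qs] lie in (1/l)Z and its rows and columns are
   unit vectors, so every row and column has at most [l^2] nonzero entries;
   greedily one extracts [T >= s / l^4] rows [j_a] and columns [k_a] with
   [Qs j_a k_b <> 0] iff [a = b] (an induced matching of the nonzero pattern).
   Split the rows into halves [J1], [J2] and let [D = A - A'] for two graphs
   both making [Q^T A Q] integral.  If [D] vanishes off the vertex pairs
   [J1 x J2] and [{j_a} x {s+1..n}], then the entries [(k_a, k_b)] and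
   [(v, k_a)] of [Q^T D Q] are [Qs j_a k_a * D j_a j_b * Qs j_b k_b] and
   [D v j_a * Qs j_a k_a]; they are integers while the [Qs] factors are
   non-integers of modulus < 1, so [D] vanishes there too.  Hence the event is
   determined by the edges outside [floor(T/2) ceil(T/2) + T (n - s)] pairs,
   each of which contributes a factor at most [max(p, 1 - p)]. *)

Section GnpDetermined.
Variables (R : realType) (n : nat) (p : R).
Hypothesis p01 : 0 <= p <= 1.

Let w (b : bool) : R := if b then p else 1 - p.

Let w_ge0 b : 0 <= w b.
Proof. by case/andP: p01 => p0 p1; case: b; rewrite /w ?subr_ge0. Qed.

Let sum_w : \sum_b w b = 1.
Proof. by rewrite big_bool /w /= addrCA subrr addr0. Qed.

Lemma sum_gnp_weight : \sum_(g : graph n) gnp_weight p g = 1.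
Proof. by rewrite /gnp_weight -(bigA_distr_bigA (fun _ => w)) big1. Qed.

Lemma sum_gnp_weight_agree (S : {set vpair n}) (g : graph n) :
  \sum_(g' : graph n | [forall e in ~: S, g' e == g e]) gnp_weight p g' =
  \prod_(e in ~: S) w (g e).
Proof.
pose F e b := if e \in S then w b else if b == g e then w b else 0.
rewrite big_mkcond /= (eq_bigr (fun g' : graph n => \prod_e F e (g' e))) => [|g' _].
  rewrite -bigA_distr_bigA (bigID (mem S)) /= big1 ?mul1r => [|e eS]; last first.
    by rewrite -[RHS]sum_w; apply: eq_bigr => b; rewrite /F eS.
  apply: eq_big => [e|e eS]; first by rewrite inE.
  by rewrite big_bool /F (negbTE eS); case: (g e); rewrite /= ?addr0 ?add0r.
case: ifP => [/forallP agr|/negbT].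
  apply: eq_bigr => e _; rewrite /F; have := agr e; rewrite inE.
  by case: (e \in S) => //= /eqP ->; rewrite eqxx.
rewrite negb_forall => /existsP [e]; rewrite negb_imply inE => /andP [eS ne].
by rewrite (bigD1 e) //= /F (negbTE eS) (negbTE ne) mul0r.
Qed.

Lemma gnp_prob_determined_le (S : {set vpair n}) (E : pred (graph n)) :
  {in E &, forall g g' : graph n, (forall e, e \notin S -> g e = g' e) -> g = g'} ->
  gnp_prob p E <= Num.max p (1 - p) ^+ #|S|.
Proof.
move=> detE; set q := Num.max p (1 - p).
have w_le_q b : w b <= q by case: b; rewrite le_max lexx ?orbT.
have weight_le g : gnp_weight p g <= q ^+ #|S| * \prod_(e in ~: S) w (g e).
  rewrite /gnp_weight (bigID (mem S)) /=.
  rewrite [X in _ <= _ * X](eq_bigl (fun e => e \notin S)) => [|e]; last by rewrite inE.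
  apply: ler_wpM2r.
    by apply: prodr_ge0 => e _; apply: w_ge0.
  by rewrite -prodr_const; apply: ler_prod => e _; rewrite w_ge0 w_le_q.
rewrite /gnp_prob (le_trans (ler_sum _ (fun g _ => weight_le g))) // -mulr_sumr.
have q_ge0 : 0 <= q by rewrite (le_trans (w_ge0 true)).
rewrite -[leRHS]mulr1 ler_wpM2l ?exprn_ge0 //.
under eq_bigr => g _ do rewrite -sum_gnp_weight_agree.
rewrite (exchange_big_dep predT) //= -sum_gnp_weight; apply: ler_sum => g' _.
rewrite sumr_const -[leRHS]mulr1n ler_wpMn2l ?prodr_ge0 // => [e _|]; first exact: w_ge0.
apply/card_le1_eqP => g1 g2 /andP [Eg1 /forallP agr1] /andP [Eg2 /forallP agr2].
apply: detE => // e eS; have := agr1 e; have := agr2 e.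
by rewrite inE eS /= => /eqP -> /eqP ->.
Qed.
End GnpDetermined.

Section IntegralityFacts.
Variable R : archiRealDomainType.

Lemma card_support_le (I : finType) (v : I -> R) (l : nat) : (0 < l)%N ->
  \sum_i v i ^+ 2 = 1 -> (forall i, l%:R * v i \is a Num.int) ->
  (#|[set i | v i != 0%R]| <= l ^ 2)%N.
Proof.
move=> l_gt0 norm1 lv_int; rewrite -(ler_nat R) natrX.
have -> : (l%:R ^+ 2 : R) = \sum_i (l%:R * v i) ^+ 2.
  by rewrite -[LHS]mulr1 -norm1 mulr_sumr; apply: eq_bigr => i _; rewrite exprMn.
rewrite (bigID (fun i => v i != 0)) /= -[leLHS]addr0.
apply: lerD; last by apply: sumr_ge0 => i _; exact: sqr_ge0.
rewrite -sum1_card natr_sum (eq_bigl (fun i => v i != 0)) => [|i]; last by rewrite inE.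
apply: ler_sum => i vi0; rewrite -real_normK ?num_real // exprn_ege1 //.
by rewrite norm_intr_ge1 // mulf_neq0 // pnatr_eq0 -lt0n.
Qed.

Lemma bool_subr_mulr_int (b1 b2 : bool) (c : R) :
  c \isn't a Num.int -> (b1%:R - b2%:R) * c \is a Num.int -> b1 = b2.
Proof.
move/negbTE=> c_nonint; case: b1; case: b2 => //=.
  by rewrite subr0 mul1r c_nonint.
by rewrite sub0r mulN1r rpredN c_nonint.
Qed.

Lemma mulr_small_nonint (c1 c2 : R) : c1 != 0 -> c2 != 0 ->
  `|c1| < 1 -> `|c2| < 1 -> c1 * c2 \isn't a Num.int.
Proof.
move=> c1_neq0 c2_neq0 c1_lt1 c2_lt1; apply/negP => c12_int.
have := norm_intr_ge1 c12_int (mulf_neq0 c1_neq0 c2_neq0).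
by rewrite normrM real_leNgt ?realM ?num_real // mulr_ilt1.
Qed.

Lemma nonint_norm_lt1 (x : R) : x ^+ 2 <= 1 -> x \isn't a Num.int -> `|x| < 1.
Proof.
move=> x2_le1 x_nonint.
have x_neq1 : x != 1 by apply: contraNneq x_nonint => ->; rewrite rpred1.
have x_neqN1 : x != -1 by apply: contraNneq x_nonint => ->; rewrite rpredN1.
rewrite ltr_norml !lt_neqAle eq_sym x_neqN1 x_neq1 /=; apply/andP; split; nra.
Qed.
End IntegralityFacts.

Section OrthogonalMatrix.
Variables (R : realDomainType) (s : nat) (Q : 'M[R]_s).
Hypothesis orthQ : Q^T *m Q = 1%:M.

Lemma orthogonal_col_norm k : \sum_i Q i k ^+ 2 = 1.
Proof.
have := congr1 (fun M : 'M[R]_s => M k k) orthQ; rewrite !mxE eqxx mulr1n => <-.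
by apply: eq_bigr => i _; rewrite !mxE expr2.
Qed.

Lemma orthogonal_row_norm i : \sum_k Q i k ^+ 2 = 1.
Proof.
have := congr1 (fun M : 'M[R]_s => M i i) (mulmx1C orthQ); rewrite !mxE eqxx mulr1n => <-.
by apply: eq_bigr => k _; rewrite !mxE expr2.
Qed.

Lemma orthogonal_entry_sqr_le1 i k : Q i k ^+ 2 <= 1.
Proof.
rewrite -(orthogonal_col_norm k) (bigD1 i) //= lerDl.
by apply: sumr_ge0 => j _; exact: sqr_ge0.
Qed.
Lemma orthogonal_row_neq0 i : exists k, Q i k != 0.
Proof.
apply/existsP; apply: contraT; rewrite negb_exists => /forallP Qi0.
have := orthogonal_row_norm i; rewrite big1 => [/eqP|k _]; first by rewrite eq_sym oner_eq0.
by move/negPn/eqP: (Qi0 k) => ->; rewrite expr0n.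
Qed.
End OrthogonalMatrix.

Lemma exists_subset_card (T : finType) (A : {set T}) k :
  (k <= #|A|)%N -> exists2 B : {set T}, B \subset A & #|B| = k.
Proof.
rewrite -bin_gt0 -cards_draws card_gt0 => /set0Pn [B].
by rewrite inE => /andP [sBA /eqP cardB]; exists B.
Qed.

Definition induced_matching (I J : finType) (E : I -> J -> bool) (M : {set I}) (f : I -> J) :=
  {in M &, forall i i', E i' (f i) = (i' == i)}.

Lemma induced_matching_exists (I J : finType) (E : I -> J -> bool) (r c : nat) :
  (forall i, exists j, E i j) ->
  (forall i, #|[set j | E i j]| <= r)%N -> (forall j, #|[set i | E i j]| <= c)%N ->
  exists (M : {set I}) (f : I -> J), induced_matching E M f /\ (#|I| <= #|M| * (r * c))%N.
Proof.
move=> E_total deg_row deg_col.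
suff /(_ setT) [M [f [_ Mf leIM]]] : forall A : {set I}, exists (M : {set I}) (f : I -> J),
    [/\ M \subset A, induced_matching E M f & (#|A| <= #|M| * (r * c))%N].
  by exists M, f; rewrite -cardsT.
move=> A; elim: {A}_.+1 {-2}A (ltnSn #|A|) => // k IH A ltAk.
have [A0|[i iA]] := set_0Vmem A.
  by exists A, (fun i => xchoose (E_total i)); split; rewrite // A0 ?cards0 // => ? ?; rewrite inE.
have [j Eij] := E_total i.
(* Discarding the rows that meet a column of row [i] keeps [(i, j)] induced. *)
set N := \bigcup_(j' in [set j' | E i j']) [set i' | E i' j'].
have iN : i \in N by apply/bigcupP; exists j; rewrite inE.
have [|M [f [sMAN Mf leAN]]] := IH (A :\: N).
  rewrite -ltnS (leq_trans _ ltAk) // ltnS; apply: proper_card; apply/properP.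
  by split; [exact: subsetDl | exists i; rewrite // inE iN].
have iNM : i \notin M by apply: contraTN iN => /(subsetP sMAN); rewrite inE => /andP [].
have MnotN x : x \in M -> x \notin N by move/(subsetP sMAN); rewrite inE => /andP [].
exists (i |: M), (fun x => if x == i then j else f x); split.
- by rewrite subUset sub1set iA (subset_trans sMAN) ?subsetDl.
- have xNi x : x \in M -> (x == i) = false by move=> xM; apply: contraNF iNM => /eqP <-.
  have inN x j' : E i j' -> E x j' -> x \in N.
    by move=> Eij' Exj'; apply/bigcupP; exists j'; rewrite inE.
  move=> x x' /setU1P [->|xM] /setU1P [->|x'M] /=; rewrite ?eqxx ?xNi //.
  + by apply: contraNF (MnotN _ x'M); apply: inN.
  + rewrite eq_sym xNi //; apply: contraNF (MnotN _ xM) => Eifx.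
    by apply: (inN _ (f x)); rewrite // Mf.
  + exact: Mf.
- rewrite cardsU1 iNM mulSn -(cardsID N A) leq_add //.
  apply: leq_trans (subset_leq_card (subsetIr _ _)) _.
  rewrite /N (leq_trans (unstable.card_big_setU _ _ _)) //.
  rewrite (@leq_trans (\sum_(j' in [set j' | E i j']) c)) ?leq_sum //.
  by rewrite sum_nat_const leq_mul2r deg_row orbT.
Qed.

Section VertexPairs.
Variable n : nat.

Definition crossing (X Y : {set 'I_n}) (u w : 'I_n) : bool :=
  (u \in X) && (w \in Y) || (u \in Y) && (w \in X).

Lemma crossingC (X Y : {set 'I_n}) u w : crossing X Y u w = crossing X Y w u.
Proof. by rewrite /crossing orbC !(andbC (u \in _)). Qed.

Definition cross_pairs (X Y : {set 'I_n}) : {set vpair n} :=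
  [set e | crossing X Y (val e).1 (val e).2].

Let sort_pair (u w : 'I_n) : 'I_n * 'I_n := if (u < w)%N then (u, w) else (w, u).

Let sort_pairE u w : sort_pair u w = (u, w) \/ sort_pair u w = (w, u).
Proof. by rewrite /sort_pair; case: ifP; [left | right]. Qed.

Let sort_pair_lt u w : u != w -> ((sort_pair u w).1 < (sort_pair u w).2)%N.
Proof. by rewrite /sort_pair -(inj_eq val_inj) neq_ltn; case: ltnP => //= _ ->. Qed.

Lemma card_cross_pairs (X Y : {set 'I_n}) :
  [disjoint X & Y] -> #|cross_pairs X Y| = (#|X| * #|Y|)%N.
Proof.
move=> dXY; have XnY x y : x \in X -> y \in Y -> x != y.
  by move=> xX yY; apply: contraTneq xX => ->; rewrite (disjointFl dXY).
rewrite -(card_imset _ val_inj) -cardsX.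
rewrite -[RHS](card_in_imset (f := fun xy => sort_pair xy.1 xy.2)); last first.
  move=> [x y] [x' y'] /setXP [/= xX yY] /setXP [/= x'X y'Y] /=.
  rewrite /sort_pair; case: ifP => _; case: ifP => _ [e1 e2]; rewrite ?e1 ?e2 //.
  - by move: (XnY _ _ xX y'Y); rewrite e1 eqxx.
  - by move: (XnY _ _ xX y'Y); rewrite e2 eqxx.
apply: eq_card => uw; apply/imsetP/imsetP => [[e]|[[x y]]].
  rewrite inE /crossing => /orP [] /andP [e1 e2] ->.
    by exists ((val e).1, (val e).2); rewrite ?inE ?e1 //= /sort_pair (valP e); case: (val e).
  exists ((val e).2, (val e).1); rewrite ?inE ?e1 ?e2 //= /sort_pair ltnNge ltnW ?(valP e) //.
  by case: (val e).
move=> /setXP [/= xX yY] ->.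
exists (Sub (sort_pair x y) (sort_pair_lt (XnY _ _ xX yY)) : vpair n) => //.
by rewrite inE /crossing SubK; case: (sort_pairE x y) => -> /=; rewrite xX yY ?orbT.
Qed.
End VertexPairs.

Lemma is_edge_val n (g : graph n) (e : vpair n) : is_edge g (val e).1 (val e).2 = g e.
Proof. by rewrite /is_edge -surjective_pairing valK. Qed.

Lemma is_edge_sym n (g : graph n) u w : is_edge g u w = is_edge g w u.
Proof.
rewrite /is_edge; case: insubP => [e1 /= lt_uw _|_]; case: insubP => //= e2 lt_wu _.
by have := ltn_trans lt_uw lt_wu; rewrite ltnn.
Qed.

Lemma is_edge_agree n (g g' : graph n) (P : 'I_n -> 'I_n -> bool) :
  (forall u w, P u w = P w u) -> (forall e, ~~ P (val e).1 (val e).2 -> g e = g' e) ->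
  forall u w, ~~ P u w -> is_edge g u w = is_edge g' u w.
Proof.
move=> P_sym agr u w Puw; rewrite /is_edge.
case: insubP => [e _ e_uw|_]; first by apply: agr; rewrite e_uw.
by case: insubP => [e _ e_wu|_] //; apply: agr; rewrite e_wu P_sym.
Qed.

Lemma adj_mx_inj n : injective (@adj_mx n).
Proof.
move=> g g' /matrixP adj_eq; apply/ffunP => e; rewrite -is_edge_val -[RHS]is_edge_val.
by move: (adj_eq (val e).1 (val e).2); rewrite !mxE; do 2 case: is_edge.
Qed.

Section MatchingEntries.
Variables (R : comPzRingType) (s : nat) (B : 'M[R]_s) (Js : {set 'I_s}) (f : 'I_s -> 'I_s).
Hypothesis Bf : induced_matching (fun i k => B i k != 0) Js f.

Lemma mulmx_matching_entry k (X : 'M[R]_(k, s)) v j :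
  j \in Js -> (forall i, i \notin Js -> X v i = 0) -> (X *m B) v (f j) = X v j * B j (f j).
Proof.
move=> jJs X0; rewrite mxE (bigD1 j) //= big1 ?addr0 // => i ij.
have [iJs|/X0 ->] := boolP (i \in Js); last by rewrite mul0r.
by move/negbTE: ij; rewrite -Bf // => /negbFE /eqP ->; rewrite mulr0.
Qed.

Lemma conj_matching_entry (X : 'M[R]_s) j j' : j \in Js -> j' \in Js ->
  (forall i i', X i i' != 0 -> (i \in Js) && (i' \in Js)) ->
  (B^T *m X *m B) (f j) (f j') = B j (f j) * X j j' * B j' (f j').
Proof.
move=> jJs j'Js XJs.
have X0 i i' : (i \notin Js) || (i' \notin Js) -> X i i' = 0.
  by move=> out; apply/eqP; apply: contraTT out => /XJs /andP [-> ->].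
have XBE i : (X *m B) i (f j') = X i j' * B j' (f j').
  by rewrite mulmx_matching_entry // => i' i'Js; rewrite X0 ?i'Js ?orbT.
rewrite -mulmxA -[_ *m _]trmxK trmx_mul trmxK mxE mulmx_matching_entry //.
  by rewrite [(X *m B)^T _ _]mxE XBE mulrC mulrA.
by move=> i iJs; rewrite [(X *m B)^T _ _]mxE XBE X0 ?iJs ?mul0r.
Qed.
End MatchingEntries.

Lemma conj_block_mx1 (R : comPzRingType) s m (B : 'M[R]_s) (D : 'M[R]_(s + m)) :
  (block_mx B 0 0 1%:M)^T *m D *m block_mx B 0 0 1%:M =
  block_mx (B^T *m ulsubmx D *m B) (B^T *m ursubmx D) (dlsubmx D *m B) (drsubmx D).
Proof.
rewrite -{1}(submxK D) tr_block_mx !trmx0 trmx1 !mulmx_block.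
by rewrite !(mul0mx, mulmx0, addr0, add0r, mulmx1, mul1mx).
Qed.

Section ForcedPairs.
Variables (s m : nat) (Qs : 'M[rat]_s) (Js J1 : {set 'I_s}) (f : 'I_s -> 'I_s).
Hypothesis J1Js : J1 \subset Js.

Let L1 := lshift m @: J1.
Let L2 := lshift m @: (Js :\: J1).
Let L := lshift m @: Js.
Let V := [set rshift s v | v : 'I_m].

Definition forced_pairs : {set vpair (s + m)} := cross_pairs L1 L2 :|: cross_pairs L V.

Let mem_lshift (A : {set 'I_s}) i : (lshift m i \in lshift m @: A) = (i \in A).
Proof. exact/mem_imset/lshift_inj. Qed.

Let rshift_notin_lshift (A : {set 'I_s}) v : (rshift s v \in lshift m @: A) = false.
Proof. by apply/imsetP => -[i _ /eqP]; rewrite eq_rlshift. Qed.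

Let lshift_notin_V i : (lshift m i \in V) = false.
Proof. by apply/imsetP => -[v _ /eqP]; rewrite eq_lrshift. Qed.

Let rshift_in_V v : rshift s v \in V.
Proof. by rewrite imset_f. Qed.

Let shift_memE := (mem_lshift, rshift_notin_lshift, lshift_notin_V, rshift_in_V).

Lemma card_forced_pairs : #|forced_pairs| = (#|J1| * #|Js :\: J1| + #|Js| * m)%N.
Proof.
rewrite cardsU (_ : _ :&: _ = set0) ?cards0 ?subn0; last first.
  apply/setP => e; rewrite !inE; case: (val e) => u w /=; rewrite /crossing.
  by case: (split_ordP u) => i ->; case: (split_ordP w) => i' ->; rewrite !shift_memE ?andbF.
have disj_L12 : [disjoint L1 & L2].
  rewrite disjoints_subset; apply/subsetP => _ /imsetP [i iJ1 ->].
  by rewrite !inE mem_lshift inE iJ1.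
have disj_LV : [disjoint L & V].
  by rewrite disjoints_subset; apply/subsetP => _ /imsetP [i _ ->]; rewrite inE lshift_notin_V.
rewrite !card_cross_pairs // !card_imset ?cardsT ?card_ord //.
all: by [exact: rshift_inj | exact: lshift_inj].
Qed.

Hypothesis Qf : induced_matching (fun i k => Qs i k != 0) Js f.
Hypothesis Qs_nonint : forall i k, Qs i k != 0 -> Qs i k \isn't a Num.int.
Hypothesis Qs_small : forall i k, Qs i k != 0 -> `|Qs i k| < 1.

Let Q : 'M[rat]_(s + m) := block_mx Qs 0 0 1%:M.

Variables g g' : graph (s + m).
Hypotheses (Qg : int_mx (Q^T *m adj_mx g *m Q)) (Qg' : int_mx (Q^T *m adj_mx g' *m Q)).
Hypothesis agree_unforced : forall e, e \notin forced_pairs -> g e = g' e.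

Let D := adj_mx g - adj_mx g'.

Let DE u w : D u w = (is_edge g u w)%:R - (is_edge g' u w)%:R.
Proof. by rewrite !mxE. Qed.

Let D_sym u w : D u w = D w u.
Proof. by rewrite !DE is_edge_sym [is_edge g' u w]is_edge_sym. Qed.

Let forced u w := crossing L1 L2 u w || crossing L V u w.

Let D_unforced u w : ~~ forced u w -> D u w = 0.
Proof.
move=> uw; rewrite DE (@is_edge_agree _ g g' forced) ?subrr // => [u' w'|e eF].
  by rewrite /forced crossingC [crossing L _ _ _]crossingC.
by apply: agree_unforced; rewrite !inE.
Qed.

Let D_int u w : (Q^T *m D *m Q) u w \is a Num.int.
Proof.
have entry_int M : int_mx M -> M u w \is a Num.int by move/forallP/(_ u)/forallP/(_ w).
by rewrite /D mulmxBr mulmxBl mxE [X in _ + X]mxE rpredB ?entry_int.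
Qed.

Let Qs_diag_neq0 i : i \in Js -> Qs i (f i) != 0.
Proof. by move=> iJs; rewrite Qf ?eqxx. Qed.

Let D_dl_eq0 v i : D (rshift s v) (lshift m i) = 0.
Proof.
have [iJs|iJs] := boolP (i \in Js); last first.
  by apply: D_unforced; rewrite /forced /crossing !shift_memE (negbTE iJs).
have := D_int (rshift s v) (lshift m (f i)); rewrite conj_block_mx1 block_mxEdl.
rewrite (mulmx_matching_entry Qf) // => [|i' i'Js]; last first.
  by rewrite 2!mxE D_unforced // /forced /crossing !shift_memE (negbTE i'Js).
by rewrite 2!mxE DE => /bool_subr_mulr_int ->; rewrite ?subrr ?Qs_nonint ?Qs_diag_neq0.
Qed.

Let D_ul_eq0 i i' : i \in J1 -> i' \in Js :\: J1 -> D (lshift m i) (lshift m i') = 0.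
Proof.
move=> iJ1 i'J2; have iJs := subsetP J1Js _ iJ1; have i'Js : i' \in Js by case/setDP: i'J2.
have := D_int (lshift m (f i)) (lshift m (f i')); rewrite conj_block_mx1 block_mxEul.
rewrite (conj_matching_entry Qf) // => [|a b]; last first.
  rewrite 2!mxE; apply: contraNT => ab; apply/eqP; apply: D_unforced; move: ab.
  rewrite /forced /crossing !shift_memE !inE orbF.
  by have := subsetP J1Js a; have := subsetP J1Js b; do 2 case: (_ \in J1); do 2 case: (_ \in Js).
rewrite 2!mxE DE mulrAC mulrC => /bool_subr_mulr_int ->; rewrite ?subrr //.
by apply: mulr_small_nonint; rewrite ?Qs_small ?Qs_diag_neq0.
Qed.

Let D_ll_eq0 i i' : D (lshift m i) (lshift m i') = 0.
Proof.
have [/andP [iJ1 i'J2]|n1] := boolP ((i \in J1) && (i' \in Js :\: J1)); first exact: D_ul_eq0.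
have [/andP [i'J1 iJ2]|n2] := boolP ((i' \in J1) && (i \in Js :\: J1)).
  by rewrite D_sym D_ul_eq0.
apply: D_unforced; rewrite /forced /crossing !shift_memE andbF !orbF negb_or n1 /=.
by rewrite andbC.
Qed.

Lemma forced_pairs_determine : g = g'.
Proof.
apply/adj_mx_inj/eqP; rewrite -subr_eq0 -/D; apply/eqP/matrixP => u w; rewrite [RHS]mxE.
case: (split_ordP u) => i ->; case: (split_ordP w) => i' ->.
- exact: D_ll_eq0.
- by rewrite D_sym D_dl_eq0.
- exact: D_dl_eq0.
- by apply: D_unforced; rewrite /forced /crossing !shift_memE.
Qed.
End ForcedPairs.

Lemma half_product_bound (R : realFieldType) (T m : nat) (x : R) :
  0 <= x -> 2 * x <= T%:R -> x * (x + m%:R - 1) <= (T./2 * (T - T./2) + T * m)%:R.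
Proof.
have : (T = T./2 + (T - T./2) /\ (T - T./2 = T./2 \/ T - T./2 = (T./2).+1))%N.
  by rewrite -divn2; lia.
move: (T./2) (T - T./2)%N => h k [-> [] ->]; rewrite -?[h.+1]addn1 !(natrD, natrM).
all: have : 0 <= h%:R :> R by []; have : 0 <= m%:R :> R by [].
all: move: (h%:R) (m%:R) => a b b_ge0 a_ge0 x_ge0 x_le.
- have : x * b <= (a + a) * b by nra.
  nra.
- have : x * b <= (a + (a + 1)) * b by nra.
  have : 0 <= (a + 1 - x) * (a + x) by nra.
  nra.
Qed.

Theorem mainTheorem2 (R : realType) (s m l : nat) (Qs : 'M[rat]_s) (p : R) :
  (1 <= s)%N -> (1 <= l)%N ->
  rat_orthogonal Qs -> is_level Qs l ->
  (forall i j, Qs i j = 0 \/ Qs i j \isn't a Num.int) ->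
  0 < p < 1 ->
  let Q : 'M[rat]_(s + m) := block_mx Qs 0 0 1%:M in
  let x : R := s%:R / (2 * (l ^ 4)%N%:R) in
  gnp_prob p (fun g : graph (s + m) => int_mx (Q^T *m adj_mx g *m Q))
  <= (Num.max p (1 - p)) `^ (x * (x + m%:R - 1)).
Proof.
move=> _ l_gt0 orthQ [_ [lev _]] Qs_entries /andP [p_gt0 p_lt1]; cbv zeta.
have Qs_int i k : l%:R * Qs i k \is a Num.int.
  by move/forallP: lev => /(_ i) /forallP /(_ k); rewrite mxE.
have Qs_nonint i k : Qs i k != 0 -> Qs i k \isn't a Num.int.
  by case: (Qs_entries i k) => [->|//]; rewrite eqxx.
have Qs_small i k : Qs i k != 0 -> `|Qs i k| < 1.
  by move=> Qik; apply: nonint_norm_lt1 (orthogonal_entry_sqr_le1 orthQ i k) (Qs_nonint i k Qik).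
have [|i|k|Js [f [Qf]]] := @induced_matching_exists _ _ (fun i k => Qs i k != 0) (l ^ 2) (l ^ 2).
- exact: orthogonal_row_neq0.
- by apply: card_support_le l_gt0 (orthogonal_row_norm orthQ i) _ => k.
- by apply: card_support_le l_gt0 (orthogonal_col_norm orthQ k) _ => i.
rewrite card_ord -expnD => s_le.
have [J1 J1Js cardJ1] : exists2 J1 : {set 'I_s}, J1 \subset Js & #|J1| = #|Js|./2.
  by apply: exists_subset_card; rewrite -divn2 leq_div.
have p01 : 0 <= p <= 1 by rewrite !ltW.
apply: le_trans (gnp_prob_determined_le p01 (S := forced_pairs m Js J1) _) _.
  by move=> g g' Qg Qg'; apply: (forced_pairs_determine J1Js Qf Qs_nonint Qs_small Qg Qg').
have q_gt0 : 0 < Num.max p (1 - p) by rewrite lt_max p_gt0.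
have q_le1 : Num.max p (1 - p) <= 1 by rewrite ge_max !ltW // ltrBlDr ltrDl.
rewrite card_forced_pairs -(powR_mulrn _ (ltW q_gt0)); apply: ger_powR; first by rewrite q_gt0.
rewrite cardsDS // cardJ1; apply: half_product_bound; first by rewrite divr_ge0.
rewrite mulrA ler_pdivrMr; last by rewrite mulr_gt0 // ltr0n expn_gt0 l_gt0.
by rewrite mulrCA -!natrM ler_nat leq_mul2l s_le orbT.
Qed.
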